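(* Let $X$ be a finite set of distinct points in a real Euclidean affine space, representing interacting particles, such that for each ordered pair of distinct points $x,y\in X$ the force on $x$ due to $y$ is $\varphi_{x,y}\overrightarrow{xy}$ with $\varphi_{x,y}\in\mathbb{R}$, and set $\varphi_{x,x}=-\sum_{y\neq x}\varphi_{x,y}$. The following are equivalent: (i) $X$ is an equilibrium, i.e. $\sum_{y\neq x}\varphi_{x,y}\overrightarrow{xy}=\overrightarrow{O}$ for every $x\in X$; (ii) $\sum_{z\in X}\varphi_{x,z}\left(\overrightarrow{xy}^2-\overrightarrow{yz}^2+\overrightarrow{zx}^2\right)=0$ for all $x,y\in X$; (iii) $\sum_{(z,w)\in X\times X}\varphi_{x,z}\varphi_{y,w}\,\overrightarrow{zw}^2=0$ for all $x,y\in X$.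
   Context: The square of a vector denotes its inner product with itself, so $\overrightarrow{xy}^2$ is the squared distance between $x$ and $y$. *)

From mathcomp Require Import all_boot all_order all_algebra.
From mathcomp Require Import reals.
Set Implicit Arguments. Unset Strict Implicit. Unset Printing Implicit Defensive.
Import Order.TTheory GRing.Theory Num.Theory.
Local Open Scope ring_scope.

(* The real Euclidean affine space is modelled as 'rV[R]_n with R : realType
   and the standard inner product; the vector xy is (y - x). *)

Definition dotv (R : realType) (n : nat) (u v : 'rV[R]_n) : R := (u *m v^T) 0 0.

Definition sqd (R : realType) (n : nat) (x y : 'rV[R]_n) : R := dotv (y - x) (y - x).

Definition phiext (R : realType) (I : finType) (phi : I -> I -> R) (x y : I) : R :=
  if x == y then - \sum_(z | z != x) phi x z else phi x y.

Definition equilibrium (R : realType) (n : nat) (I : finType)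
  (p : I -> 'rV[R]_n) (phi : I -> I -> R) : Prop :=
  forall x : I, \sum_(y | y != x) phi x y *: (p y - p x) = 0.

(* Put psi := phiext phi.  Every row of psi sums to zero, so the resultant
   F x := sum_z psi_{x,z} p_z is translation invariant; taking the origin at x
   shows that F x is the net force on x, and the law of cosines turns the sum
   in (ii) into 2 <F x, xy>.  For two zero-sum weights, expanding |zw|^2 in
   the double sum of (iii) leaves only the cross term, -2 <F x, F y>.  Hence
   (i) -> (ii) is immediate; (ii) says F x is orthogonal to every xw, hence
   to F y, giving (iii); and (iii) with y = x gives |F x|^2 = 0, i.e. (i). *)

From mathcomp Require Import all_boot all_order all_algebra.
From mathcomp Require Import reals.
From mathcomp Require Import ring.
Set Implicit Arguments. Unset Strict Implicit. Unset Printing Implicit Defensive.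
Import Order.TTheory GRing.Theory Num.Theory.
Local Open Scope ring_scope.

Section InnerProduct.
Variables (R : realType) (n : nat).
Implicit Types u v w x y z : 'rV[R]_n.

Lemma dotvE u v : dotv u v = \sum_i u 0 i * v 0 i.
Proof. by rewrite /dotv mxE; apply: eq_bigr => i _; rewrite mxE. Qed.

Lemma dotvC u v : dotv u v = dotv v u.
Proof. by rewrite /dotv -[v *m u^T]trmxK trmx_mul !trmxK [RHS]mxE. Qed.

Lemma dotvZl a u v : dotv (a *: u) v = a * dotv u v.
Proof. by rewrite /dotv -scalemxAl mxE. Qed.

Lemma dotv0l v : dotv 0 v = 0.
Proof. by rewrite /dotv mul0mx mxE. Qed.

Lemma dotv_suml (I : finType) (u : I -> 'rV[R]_n) v :
  dotv (\sum_i u i) v = \sum_i dotv (u i) v.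
Proof. by rewrite /dotv mulmx_suml summxE. Qed.

Lemma dotv_eq0 u : dotv u u = 0 -> u = 0.
Proof.
rewrite dotvE => uu0; apply/rowP => i; rewrite mxE.
have /(_ i isT)/eqP := psumr_eq0P (fun k _ => sqr_ge0 (u 0 k)) uu0.
by rewrite mulf_eq0 orbb => /eqP.
Qed.

Lemma sqd_law_of_cosines x y z :
  sqd x y - sqd y z + sqd z x = 2 * dotv (z - x) (y - x).
Proof.
rewrite /sqd !dotvE -sumrB -big_split mulr_sumr; apply: eq_bigr => i _.
by rewrite !mxE /=; ring.
Qed.

Lemma sqd_expand x y : sqd x y = dotv x x + (dotv y y - 2 * dotv y x).
Proof.
rewrite /sqd !dotvE mulr_sumr -sumrB -big_split.
by apply: eq_bigr => i _; rewrite !mxE /=; ring.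
Qed.

End InnerProduct.

Section ZeroSumWeights.
Variables (R : realType) (n : nat) (I : finType) (a : I -> R).
Hypothesis a_sum0 : \sum_i a i = 0.
Implicit Types (p : I -> 'rV[R]_n) (q u : 'rV[R]_n).

Lemma zero_sum_mulrDr (c : R) (g : I -> R) :
  \sum_i a i * (c + g i) = \sum_i a i * g i.
Proof.
under eq_bigr do rewrite mulrDr.
by rewrite big_split /= -mulr_suml a_sum0 mul0r add0r.
Qed.

Lemma zero_sum_scalerBr p q :
  \sum_i a i *: (p i - q) = \sum_i a i *: p i.
Proof.
under eq_bigr do rewrite scalerBr.
by rewrite sumrB -scaler_suml a_sum0 scale0r subr0.
Qed.

Lemma zero_sum_dotvr_eq0 p u q :
  (forall i, dotv u (p i - q) = 0) -> dotv u (\sum_i a i *: p i) = 0.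
Proof.
move=> u_orth; rewrite dotvC -(zero_sum_scalerBr p q) dotv_suml big1 // => i _.
by rewrite dotvZl dotvC u_orth mulr0.
Qed.

Lemma zero_sum_sqd_law_of_cosines p x y :
  \sum_i a i * (sqd x y - sqd y (p i) + sqd (p i) x)
    = 2 * dotv (\sum_i a i *: p i) (y - x).
Proof.
rewrite -(zero_sum_scalerBr p x) dotv_suml mulr_sumr.
by apply: eq_bigr => i _; rewrite sqd_law_of_cosines dotvZl mulrCA.
Qed.

Lemma zero_sum_sqdr p u :
  \sum_i a i * sqd u (p i)
    = \sum_i a i * dotv (p i) (p i) - 2 * dotv (\sum_i a i *: p i) u.
Proof.
under eq_bigr do rewrite sqd_expand.
rewrite zero_sum_mulrDr dotv_suml mulr_sumr -sumrB.
by apply: eq_bigr => i _; rewrite dotvZl; ring.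
Qed.

End ZeroSumWeights.

Lemma zero_sum_sqd_pair (R : realType) (n : nat) (I : finType)
    (a b : I -> R) (p : I -> 'rV[R]_n) :
  \sum_i a i = 0 -> \sum_i b i = 0 ->
  \sum_(zw : I * I) a zw.1 * b zw.2 * sqd (p zw.1) (p zw.2)
    = - 2 * dotv (\sum_i a i *: p i) (\sum_i b i *: p i).
Proof.
move=> a_sum0 b_sum0.
rewrite -(pair_big predT predT (fun z w => a z * b w * sqd (p z) (p w))) /=.
under eq_bigr do under eq_bigr do rewrite -mulrA.
under eq_bigr do rewrite -mulr_sumr (zero_sum_sqdr b_sum0).
rewrite (zero_sum_mulrDr a_sum0) dotv_suml mulr_sumr.
by apply: eq_bigr => i _; rewrite dotvZl [dotv _ (p i)]dotvC; ring.
Qed.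

Lemma phiext_sum0 (R : realType) (I : finType) (phi : I -> I -> R) x :
  \sum_z phiext phi x z = 0.
Proof.
rewrite (bigD1 x) //= /phiext eqxx (eq_bigr (phi x)) ?addNr // => z zx.
by rewrite eq_sym (negbTE zx).
Qed.

Lemma equilibrium_phiextP (R : realType) (n : nat) (I : finType)
    (p : I -> 'rV[R]_n) (phi : I -> I -> R) :
  equilibrium p phi <-> forall x, \sum_z phiext phi x z *: p z = 0.
Proof.
have net_force x :
    \sum_z phiext phi x z *: p z = \sum_(y | y != x) phi x y *: (p y - p x).
  rewrite -(zero_sum_scalerBr (phiext_sum0 phi x) p (p x)).
  rewrite (bigD1 x) //= subrr scaler0 add0r.
  by apply: eq_bigr => y yx; rewrite /phiext eq_sym (negbTE yx).
by split=> eq0 x; move: (eq0 x); rewrite net_force.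
Qed.

Theorem corollary3p2 (R : realType) (n : nat) (I : finType)
  (p : I -> 'rV[R]_n) (p_inj : injective p) (phi : I -> I -> R) :
  [<-> equilibrium p phi;
       forall x y : I,
         \sum_(z : I) phiext phi x z
            * (sqd (p x) (p y) - sqd (p y) (p z) + sqd (p z) (p x)) = 0;
       forall x y : I,
         \sum_(zw : I * I) phiext phi x zw.1 * phiext phi y zw.2
            * sqd (p zw.1) (p zw.2) = 0].
Proof.
have psi_sum0 := phiext_sum0 phi.
have sum_ii x y := zero_sum_sqd_law_of_cosines (psi_sum0 x) p (p x) (p y).
have sum_iii x y := zero_sum_sqd_pair p (psi_sum0 x) (psi_sum0 y).
tfae.
- by move/equilibrium_phiextP => F0 x y; rewrite sum_ii F0 dotv0l mulr0.
- move=> ii x y.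
  rewrite sum_iii (zero_sum_dotvr_eq0 (psi_sum0 y) (q := p x)) ?mulr0 // => w.
  by have /eqP := ii x w; rewrite sum_ii mulf_eq0 pnatr_eq0 /= => /eqP.
- move=> iii; apply/equilibrium_phiextP => x; apply: dotv_eq0.
  by have /eqP := iii x x; rewrite sum_iii mulf_eq0 oppr_eq0 pnatr_eq0 /= => /eqP.
Qed.
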